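(* Let $n\geq 1$ be an integer with $n\neq 2$. Then $K_n\times H$ is type I for every finite simple bipartite graph $H$.
   Context: All graphs are finite and simple. $K_n$ is the complete graph on $n$ vertices. A total colouring of a graph $G$ is an assignment of colours to the vertices and edges of $G$ such that any two adjacent vertices, any two edges sharing an endpoint, and any edge and each of its endpoints receive different colours. The total chromatic number $\chi''(G)$ is the minimum number of colours in a total colouring of $G$. A graph $G$ with maximum degree $\Delta(G)$ is called type I if $\chi''(G)=\Delta(G)+1$. The direct product $G\times H$ has vertex set $V(G)\times V(H)$, with $(u,v)$ adjacent to $(u',v')$ if and only if $uu'\in E(G)$ and $vv'\in E(H)$. *)

From mathcomp Require Import all_boot.
Set Implicit Arguments. Unset Strict Implicit. Unset Printing Implicit Defensive.

Definition simple_graph (V : finType) (e : rel V) : Prop :=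
  symmetric e /\ irreflexive e.

Definition complete_rel (n : nat) : rel 'I_n := fun i j => i != j.

Definition direct_prod_rel (V W : finType) (e : rel V) (f : rel W) : rel (V * W) :=
  fun x y => e x.1 y.1 && f x.2 y.2.

Definition bipartite (V : finType) (e : rel V) : Prop :=
  exists side : V -> bool, forall u v, e u v -> side u != side v.

Definition degree (V : finType) (e : rel V) (v : V) : nat := #|[set w | e v w]|.

Definition max_degree (V : finType) (e : rel V) : nat := \max_(v : V) degree e v.

(* A total colouring with k colours: colours of vertices [cv] and of edges
   [ce] (ce u v is the colour of the edge uv, only meaningful when e u v). *)
Definition total_colouring (V : finType) (e : rel V) (k : nat)
    (cv : V -> 'I_k) (ce : V -> V -> 'I_k) : Prop :=
  [/\ (forall u v, e u v -> ce u v = ce v u),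
      (forall u v, e u v -> cv u != cv v),
      (forall u v w, e u v -> e u w -> v != w -> ce u v != ce u w)
    & (forall u v, e u v -> (ce u v != cv u) /\ (ce u v != cv v))].

Definition total_colourable (V : finType) (e : rel V) (k : nat) : Prop :=
  exists (cv : V -> 'I_k) (ce : V -> V -> 'I_k), total_colouring e cv ce.

Definition is_total_chromatic_number (V : finType) (e : rel V) (k : nat) : Prop :=
  total_colourable e k /\ forall k', total_colourable e k' -> k <= k'.

Definition type_I (V : finType) (e : rel V) : Prop :=
  is_total_chromatic_number e (max_degree e).+1.

From mathcomp Require Import all_boot zify.
Set Implicit Arguments. Unset Strict Implicit. Unset Printing Implicit Defensive.

(* Colour the vertex (i, a) of K_n x H by i. By Koenig's theorem the edges of
   the bipartite graph H split into D = Delta(H) matchings, and each matching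
   lifts to a layer of K_n x H in which the colour of an edge (i, a)(j, b),
   oriented by the bipartition, may depend on (i, j) alone. Layer 0 reuses the
   n vertex colours through an idempotent Latin square of order n, which exists
   exactly when n <> 2; every other layer gets n - 1 fresh colours, indexed by
   (j - i - 1) mod n. This uses n + (D - 1)(n - 1) = Delta(K_n x H) + 1 colours,
   and Delta + 1 colours are always necessary. *)

Definition idempotent_latin_square (n : nat) (L : nat -> nat -> nat) : Prop :=
  [/\ forall i j, i < n -> j < n -> L i j < n,
      forall i, i < n -> L i i = i,
      forall i j j', i < n -> j < n -> j' < n -> L i j = L i j' -> j = j'
    & forall i i' j, i < n -> i' < n -> j < n -> L i j = L i' j -> i = i'].

Section Halving.
Variable m : nat.
Local Notation q := m.*2.+1.

(* m + 1 is the inverse of 2 modulo 2m + 1. *)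
Definition halve x := (x * m.+1) %% q.

Lemma halve_lt x : halve x < q.
Proof. by rewrite ltn_mod. Qed.

Lemma halve_eq x y : x = y %[mod q] -> halve x = halve y.
Proof. by rewrite /halve => Exy; rewrite -modnMml Exy modnMml. Qed.

Lemma halve_double x : halve (x + x) = x %% q.
Proof.
rewrite /halve; have -> : (x + x) * m.+1 = x * q + x by lia.
by rewrite modnMDl.
Qed.

Lemma halve_inj x y : halve x = halve y -> x = y %[mod q].
Proof.
have double_halve z : 2 * halve z = z %[mod q].
  rewrite /halve modnMmr; have -> : 2 * (z * m.+1) = z * q + z by lia.
  by rewrite modnMDl.
by move=> hxy; rewrite -double_halve hxy double_halve.
Qed.

Lemma halving_latin_square : idempotent_latin_square q (fun i j => halve (i + j)).
Proof.
split=> [i j _ _ | i lt_iq | i j j' _ lt_jq lt_j'q | i i' j lt_iq lt_i'q _].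
- exact: halve_lt.
- by rewrite halve_double modn_small.
- by move/halve_inj/eqP; rewrite eqn_modDl !modn_small // => /eqP.
- by move/halve_inj/eqP; rewrite eqn_modDr !modn_small // => /eqP.
Qed.

End Halving.

Section Prolongation.
Variables (q : nat) (L : nat -> nat -> nat) (sigma tau : nat -> nat).
Hypothesis L_latin : idempotent_latin_square q L.
Hypothesis sigma_lt : forall i, i < q -> sigma i < q.
Hypothesis tau_lt : forall j, j < q -> tau j < q.
Hypothesis sigmaK : forall i, i < q -> tau (sigma i) = i.
Hypothesis tauK : forall j, j < q -> sigma (tau j) = j.
Hypothesis sigma_neq : forall i, i < q -> sigma i != i.
Hypothesis transversal :
  forall i i', i < q -> i' < q -> L i (sigma i) = L i' (sigma i') -> i = i'.

Let L_neq_q a b : a < q -> b < q -> (L a b == q) = false.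
Proof. by case: L_latin => L_lt _ _ _ lt_aq lt_bq; rewrite ltn_eqF ?L_lt. Qed.

(* Prolongation along the transversal (i, sigma i): each of its cells gets the
   new symbol q, and its old symbol moves to the new row and column. *)
Definition prolong i j :=
  if i == q then (if j == q then q else L (tau j) j)
  else if j == q then L i (sigma i)
  else if j == sigma i then q else L i j.

Lemma prolong_row_inj i j j' : i <= q -> j <= q -> j' <= q ->
  prolong i j = prolong i j' -> j = j'.
Proof.
case: L_latin => _ _ L_row _.
rewrite /prolong [i <= q]leq_eqVlt [j <= q]leq_eqVlt [j' <= q]leq_eqVlt.
move=> /predU1P[-> | lt_iq] /predU1P[-> | lt_jq] /predU1P[-> | lt_j'q] //;
  rewrite ?eqxx ?(ltn_eqF lt_iq) ?(ltn_eqF lt_jq) ?(ltn_eqF lt_j'q).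
- by move/esym/eqP; rewrite L_neq_q ?tau_lt.
- by move/eqP; rewrite L_neq_q ?tau_lt.
- move=> E; rewrite -(tauK lt_jq) -(tauK lt_j'q); congr sigma.
  by apply: transversal; rewrite ?tau_lt // !tauK.
- case: eqP => [_ | ne_j'] E; first by move/eqP: E; rewrite L_neq_q ?sigma_lt.
  by case: ne_j'; symmetry; apply: L_row E; rewrite ?sigma_lt.
- case: eqP => [_ | ne_j] E; first by move/esym/eqP: E; rewrite L_neq_q ?sigma_lt.
  by case: ne_j; apply: L_row E; rewrite ?sigma_lt.
- case: eqP => [-> | ne_j]; case: eqP => [-> | ne_j'] // E.
  + by move/esym/eqP: E; rewrite L_neq_q.
  + by move/eqP: E; rewrite L_neq_q.
  + exact: L_row E.
Qed.

Lemma prolong_col_inj i i' j : i <= q -> i' <= q -> j <= q ->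
  prolong i j = prolong i' j -> i = i'.
Proof.
case: L_latin => _ _ _ L_col.
rewrite /prolong [i <= q]leq_eqVlt [i' <= q]leq_eqVlt [j <= q]leq_eqVlt.
move=> /predU1P[-> | lt_iq] /predU1P[-> | lt_i'q] /predU1P[-> | lt_jq] //;
  rewrite ?eqxx ?(ltn_eqF lt_iq) ?(ltn_eqF lt_i'q) ?(ltn_eqF lt_jq).
- by move/esym/eqP; rewrite L_neq_q ?sigma_lt.
- case: eqP => [_ | ne_j] E; first by move/eqP: E; rewrite L_neq_q ?tau_lt.
  by case: ne_j; rewrite -(L_col _ _ _ (tau_lt lt_jq) lt_i'q lt_jq E) tauK.
- by move/eqP; rewrite L_neq_q ?sigma_lt.
- case: eqP => [_ | ne_j] E; first by move/esym/eqP: E; rewrite L_neq_q ?tau_lt.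
  by case: ne_j; rewrite (L_col _ _ _ lt_iq (tau_lt lt_jq) lt_jq E) tauK.
- exact: transversal.
- case: eqP => [-> | ne_j]; case: eqP => [E | ne_j'] // F.
  + by rewrite -(sigmaK lt_iq) -(sigmaK lt_i'q) E.
  + by move/esym/eqP: F; rewrite L_neq_q ?sigma_lt.
  + by move/eqP: F; rewrite L_neq_q ?sigma_lt.
  + exact: L_col F.
Qed.

Lemma prolong_latin_square : idempotent_latin_square q.+1 prolong.
Proof.
case: L_latin => L_lt L_diag _ _.
split=> [i j | i | i j j' | i i' j]; rewrite ?ltnS; last 2 first.
- exact: prolong_row_inj.
- exact: prolong_col_inj.
- rewrite /prolong [i <= q]leq_eqVlt [j <= q]leq_eqVlt.
  move=> /predU1P[-> | lt_iq] /predU1P[-> | lt_jq];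
    rewrite ?eqxx ?(ltn_eqF lt_iq) ?(ltn_eqF lt_jq) //; try case: ifP => _ //;
    by apply: ltnW; rewrite L_lt ?sigma_lt ?tau_lt.
- rewrite /prolong leq_eqVlt => /predU1P[-> | lt_iq]; first by rewrite eqxx.
  by rewrite (ltn_eqF lt_iq) eq_sym (negbTE (sigma_neq lt_iq)) L_diag.
Qed.
End Prolongation.

Lemma halving_prolong_latin_square m : 0 < m ->
  idempotent_latin_square m.*2.+2
    (prolong m.*2.+1 (fun i j => halve m (i + j))
             (fun i => i.+1 %% m.*2.+1) (fun j => (j + m.*2) %% m.*2.+1)).
Proof.
move=> m_gt0; set q := m.*2.+1.
apply: prolong_latin_square => [|i _|j _|i lt_iq|j lt_jq|i lt_iq|i i' lt_iq lt_i'q].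
- exact: halving_latin_square.
- exact: ltn_mod.
- exact: ltn_mod.
- by rewrite modnDml addSnnS modnDr modn_small.
- by rewrite -addn1 modnDml -addnA addn1 modnDr modn_small.
- have [lt_Siq | ] := ltnP i.+1 q; first by rewrite modn_small // gtn_eqF.
  rewrite leq_eqVlt ltnNge lt_iq orbF => /eqP Eq; rewrite -Eq modnn.
  by move: Eq; rewrite /q; lia.
- rewrite !(halve_eq (modnDmr _ _ _)) => /halve_inj.
  rewrite !addnS -[(i + i).+1]addn1 -[(i' + i').+1]addn1 => /eqP.
  rewrite eqn_modDr => /eqP /halve_eq.
  by rewrite !halve_double !modn_small.
Qed.

Lemma idempotent_latin_square_exists n : n != 2 -> exists L, idempotent_latin_square n L.
Proof.
have := odd_double_half n; case: (odd n) => /= [<- _ | ].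
  by exists (fun i j => halve n./2 (i + j)); apply: halving_latin_square.
rewrite add0n => <-; case: n./2 => [|[|m]] // _.
  by exists (fun _ _ => 0); rewrite double0; split=> i; rewrite ltn0.
by rewrite doubleS; eexists; apply: halving_prolong_latin_square.
Qed.

Definition proper_edge_colouring (V : finType) (g : rel V) (D : nat)
    (c : V -> V -> nat) : Prop :=
  [/\ forall x y, g x y -> c x y = c y x,
      forall x y, g x y -> c x y < D
    & forall x y z, g x y -> g x z -> y != z -> c x y != c x z].

Section EdgeColouring.
Variable V : finType.
Implicit Types (g : rel V) (c : V -> V -> nat) (s : V -> bool).

Lemma missing_colour g c D x :
  degree g x < D -> exists2 a, a < D & forall y, g x y -> c x y != a.
Proof.
move=> deg_lt; pose S := [seq c x y | y in [set y | g x y]].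
have [/allP S_full | /allPn[a]] := boolP (all (mem S) (iota 0 D)).
  have := uniq_leq_size (iota_uniq 0 D) S_full.
  by rewrite size_iota size_image leqNgt deg_lt.
rewrite mem_iota => a_lt a_notin_S; exists a => // y gxy.
by apply: contraNneq a_notin_S => <-; apply: image_f; rewrite inE.
Qed.

Definition link (u v x y : V) := ((x == u) && (y == v)) || ((x == v) && (y == u)).

Lemma link_sym u v x y : link u v x y = link u v y x.
Proof. by rewrite /link orbC [(x == v) && _]andbC [(x == u) && _]andbC. Qed.

Lemma link_uniq u v x y z : link u v x y -> link u v x z -> y = z.
Proof.
by rewrite /link => /orP[]/andP[/eqP-> /eqP->] /orP[]/andP[/eqP E /eqP->];
  rewrite ?E.
Qed.

Definition remove_edge g u v : rel V := fun x y => g x y && ~~ link u v x y.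

Definition edges g := [set p : V * V | g p.1 p.2].

Lemma remove_edge_sym g u v : symmetric g -> symmetric (remove_edge g u v).
Proof. by move=> g_sym x y; rewrite /remove_edge g_sym link_sym. Qed.

Lemma degree_remove_edge g u v x : degree (remove_edge g u v) x <= degree g x.
Proof. by apply: subset_leq_card; apply/subsetP => y; rewrite !inE => /andP[]. Qed.

Lemma degree_remove_edge_lt g u v x y : g x y -> link u v x y ->
  degree (remove_edge g u v) x < degree g x.
Proof.
move=> gxy lxy; apply: proper_card; apply/properP; split.
  by apply/subsetP => z; rewrite !inE => /andP[].
by exists y; rewrite !inE ?gxy // /remove_edge lxy andbF.
Qed.

Lemma card_edges_remove_edge g u v : g u v ->
  #|edges (remove_edge g u v)| < #|edges g|.
Proof.
move=> guv; apply: proper_card; apply/properP; split.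
  by apply/subsetP => p; rewrite !inE => /andP[].
by exists (u, v); rewrite !inE //= /remove_edge /link !eqxx andbF.
Qed.

Lemma proper_edge_colouring_add_edge g u v D c a :
    proper_edge_colouring (remove_edge g u v) D c -> a < D ->
    (forall y, remove_edge g u v u y -> c u y != a) ->
    (forall y, remove_edge g u v v y -> c v y != a) ->
  proper_edge_colouring g D (fun x y => if link u v x y then a else c x y).
Proof.
move=> [c_sym c_lt c_inj] a_lt miss_u miss_v.
have removed x y : g x y -> ~~ link u v x y -> remove_edge g u v x y.
  by move=> gxy nlxy; apply/andP.
have miss x y : link u v x y -> forall z, remove_edge g u v x z -> c x z != a.
  by case/orP=> /andP[/eqP-> _]; [apply: miss_u | apply: miss_v].
split=> [x y gxy | x y gxy | x y z gxy gxz ne_yz]; rewrite -?(link_sym u v x y).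
- by case: ifP => // /negbT/(removed _ _ gxy)/c_sym.
- by case: ifP => // /negbT/(removed _ _ gxy)/c_lt.
- case: ifPn => lxy; case: ifPn => lxz.
  + by rewrite (link_uniq lxy lxz) eqxx in ne_yz.
  + by rewrite eq_sym; apply: miss lxy _ (removed _ _ gxz lxz).
  + exact: miss lxz _ (removed _ _ gxy lxy).
  + exact: c_inj (removed _ _ gxy lxy) (removed _ _ gxz lxz) ne_yz.
Qed.

Lemma path_side s (e : rel V) x p : (forall y z, e y z -> s y != s z) ->
  path e x p -> s (last x p) = odd (size p) (+) s x.
Proof.
move=> e_side; elim: p x => [|y p IHp] x //=.
case/andP=> /e_side ne_xy /IHp->.
have -> : s y = ~~ s x by move: ne_xy; case: (s x); case: (s y).
by rewrite addbN addNb.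
Qed.

Section KempeChain.
Variables (g : rel V) (D : nat) (c : V -> V -> nat) (al be : nat).
Hypothesis g_sym : symmetric g.
Hypothesis c_proper : proper_edge_colouring g D c.

Definition swap_colour k := if k == al then be else if k == be then al else k.

Lemma swap_colourK : involutive swap_colour.
Proof.
move=> k; rewrite /swap_colour.
have [-> | ne_al] := eqVneq k al.
  by case: (eqVneq be al) => [-> | ne_be]; rewrite ?eqxx // (negbTE ne_be) eqxx.
have [<- | ne_be] := eqVneq k be; first by rewrite eqxx.
by rewrite (negbTE ne_al) (negbTE ne_be).
Qed.

Lemma swap_colour_id k : k \notin [:: al; be] -> swap_colour k = k.
Proof. by rewrite !inE negb_or /swap_colour => /andP[/negbTE-> /negbTE->]. Qed.

Lemma swap_colour_alt k k' : k \in [:: al; be] -> k' \in [:: al; be] -> k != k' ->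
  k' = swap_colour k.
Proof.
rewrite /swap_colour !inE => /orP[]/eqP-> /orP[]/eqP->; rewrite ?eqxx //.
by move/negbTE->.
Qed.

Lemma iter_swap_colour n k :
  iter n swap_colour k = if odd n then swap_colour k else k.
Proof.
elim: n => //= n ->; case: (odd n) => //=; exact: swap_colourK.
Qed.

Definition kempe_rel : rel V := fun x y => g x y && (c x y \in [:: al; be]).

Lemma kempe_rel_sym : symmetric kempe_rel.
Proof.
case: c_proper => c_sym _ _ x y; rewrite /kempe_rel g_sym.
by case gyx: (g y x); rewrite //= (c_sym y x).
Qed.

Lemma kempe_path_end p y x : uniq (y :: x :: p) -> path kempe_rel y (x :: p) ->
  exists2 z, g (last x p) z & c (last x p) z = iter (size p) swap_colour (c y x).
Proof.
case: c_proper => c_sym _ c_inj.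
elim: p y x => [|x' p IHp] y x /=.
  move=> _ /andP[/andP[gyx _] _]; have gxy : g x y by rewrite g_sym.
  by exists y; rewrite // (c_sym _ _ gxy).
move=> /andP[y_notin uniq_xp] /andP[kyx path_xp].
have ne_yx' : y != x' by apply: contraNneq y_notin => ->; rewrite !inE eqxx orbT.
have [z gz cz] := IHp x x' uniq_xp path_xp.
exists z; rewrite // cz -iterS iterSr; congr iter.
case/andP: kyx path_xp => gyx cyx /andP[/andP[gxx' cxx'] _].
have gxy : g x y by rewrite g_sym.
apply: swap_colour_alt; rewrite // -(c_sym _ _ gxy).
exact: c_inj gxy gxx' ne_yx'.
Qed.

(* A kempe_rel path from v starts with an al-edge since be is missing at v; if
   it ended at u, bipartiteness would make its length odd, so it would end with
   an al-edge at u. *)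
Lemma kempe_chain_avoids s u v : (forall x y, g x y -> s x != s y) -> s u != s v ->
    (forall y, g u y -> c u y != al) -> (forall y, g v y -> c v y != be) ->
  ~~ connect kempe_rel v u.
Proof.
move=> g_side ne_uv miss_u miss_v; apply/negP => /connectP[p0 path0 u_last].
case: (shortenP path0) u_last => -[|x p] path_p uniq_p _ u_last.
  by rewrite u_last eqxx in ne_uv.
have kempe_side y z : kempe_rel y z -> s y != s z by case/andP => /g_side.
have even_p : ~~ odd (size p).
  move: ne_uv; rewrite u_last (path_side kempe_side path_p) /=.
  by case: (odd (size p)); case: (s v).
have cvx : c v x = al.
  case/andP: path_p => /andP[gvx]; rewrite !inE => /orP[/eqP // | /eqP cvx] _.
  by move: (miss_v x gvx); rewrite cvx eqxx.
have [z] := kempe_path_end uniq_p path_p.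
rewrite /= in u_last; rewrite -u_last iter_swap_colour (negbTE even_p) cvx => guz cuz.
by move: (miss_u z guz); rewrite cuz eqxx.
Qed.

Lemma kempe_swap s u v : (forall x y, g x y -> s x != s y) -> s u != s v ->
    al < D -> be < D ->
    (forall y, g u y -> c u y != al) -> (forall y, g v y -> c v y != be) ->
  exists c', [/\ proper_edge_colouring g D c',
                 forall y, g u y -> c' u y != al
               & forall y, g v y -> c' v y != al].
Proof.
move=> g_side ne_uv al_lt be_lt miss_u miss_v.
have u_out := kempe_chain_avoids g_side ne_uv miss_u miss_v.
case: c_proper => c_sym c_lt c_inj.
pose K := connect kempe_rel v.
have K_edge x y : g x y -> c x y \in [:: al; be] -> K x = K y.
  move=> gxy cxy; have kxy : kempe_rel x y by apply/andP.
  apply/idP/idP => Kx; first exact: connect_trans Kx (connect1 kxy).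
  by apply: connect_trans Kx (connect1 _); rewrite kempe_rel_sym.
exists (fun x y => if K x then swap_colour (c x y) else c x y); split.
- split=> [x y gxy | x y gxy | x y z gxy gxz ne_yz].
  + have [cxy | cxy] := boolP (c x y \in [:: al; be]).
      by rewrite (K_edge _ _ gxy cxy) (c_sym _ _ gxy).
    by rewrite -(c_sym _ _ gxy) swap_colour_id // !if_same.
  + by case: (K x); rewrite /swap_colour; do ?case: ifP; rewrite // c_lt.
  + by case: (K x); rewrite ?(inj_eq (inv_inj swap_colourK)); apply: c_inj.
- by move=> y guy; rewrite /K (negbTE u_out); apply: miss_u.
- move=> y gvy; rewrite /K connect0 (inv_eq swap_colourK).
  by rewrite /swap_colour eqxx; apply: miss_v.
Qed.

End KempeChain.

Theorem konig_edge_colouring s g D :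
    symmetric g -> (forall x y, g x y -> s x != s y) ->
    (forall x, degree g x <= D) ->
  exists c, proper_edge_colouring g D c.
Proof.
have [N] := ubnP #|edges g|; elim: N g => // N IHN g.
rewrite ltnS => card_le g_sym g_side deg_le.
have [[u v] guv | no_edge] := pickP [pred p : V * V | g p.1 p.2]; last first.
  by exists (fun _ _ => 0); split=> x y; rewrite [g x y](no_edge (x, y)).
pose g' := remove_edge g u v.
have g'_sym : symmetric g' by apply: remove_edge_sym.
have g'_side x y : g' x y -> s x != s y by case/andP => /g_side.
have [c c_proper] : exists c, proper_edge_colouring g' D c.
  apply: (IHN g' _ g'_sym g'_side).
    exact: leq_trans (card_edges_remove_edge guv) card_le.
  by move=> x; apply: leq_trans (degree_remove_edge _ _ _ _) (deg_le x).
have deg_lt x y : g x y -> link u v x y -> degree g' x < D.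
  by move=> gxy lxy; apply: leq_trans (deg_le x); apply: degree_remove_edge_lt gxy lxy.
have luv : link u v u v by rewrite /link !eqxx.
have lvu : link u v v u by rewrite /link !eqxx orbT.
have [al al_lt miss_u] := missing_colour c (deg_lt u v guv luv).
have gvu : g v u by rewrite g_sym.
have [be be_lt miss_v] := missing_colour c (deg_lt v u gvu lvu).
have [c' [c'_proper miss_u' miss_v']] :=
  kempe_swap g'_sym c_proper g'_side (g_side u v guv) al_lt be_lt miss_u miss_v.
by exists (fun x y => if link u v x y then al else c' x y);
  apply: proper_edge_colouring_add_edge.
Qed.

End EdgeColouring.

Section TotalColouring.
Variables (V : finType) (e : rel V).

Lemma degree_lt_total_colourable k x : total_colourable e k -> degree e x < k.
Proof.
case=> cv [ce [_ _ ce_inj ce_cv]]; pose N := [set y | e x y].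
have ce_injN : {in N &, injective (ce x)}.
  move=> y z; rewrite !inE => exy exz /eqP; apply: contraTeq.
  exact: ce_inj exy exz.
have cv_notin : cv x \notin ce x @: N.
  by apply/imsetP => -[y]; rewrite inE => /ce_cv[/eqP ne _] /esym.
have := max_card (cv x |: ce x @: N).
by rewrite cardsU1 cv_notin card_in_imset // card_ord.
Qed.

Lemma type_I_of_total_colourable :
  0 < #|V| -> total_colourable e (max_degree e).+1 -> type_I e.
Proof.
case/card_gt0P=> x0 _ colourable; split=> // -[|k] colourable_k.
  by case: colourable_k => cv _; case: (cv x0).
by apply/bigmax_leqP => x _; apply: degree_lt_total_colourable colourable_k.
Qed.

Lemma total_colourable_nat k (cv : V -> nat) (ce : V -> V -> nat) :
    (forall u v, e u v -> [&& cv u <= k, cv v <= k & ce u v <= k]) ->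
    (forall u v, e u v -> ce u v = ce v u) ->
    (forall u v, e u v -> cv u != cv v) ->
    (forall u v w, e u v -> e u w -> v != w -> ce u v != ce u w) ->
    (forall u v, e u v -> (ce u v != cv u) && (ce u v != cv v)) ->
  total_colourable e k.+1.
Proof.
move=> bounded ce_sym cv_proper ce_proper ce_cv.
have inord_eq a b : a <= k -> b <= k -> ((inord a : 'I_k.+1) == inord b) = (a == b).
  by move=> a_le b_le; rewrite -val_eqE /= !inordK.
exists (fun u => inord (cv u)), (fun u v => inord (ce u v)).
split=> [u v euv | u v euv | u v w euv euw ne_vw | u v euv].
- by rewrite ce_sym.
- by case/and3P: (bounded u v euv) => *; rewrite inord_eq ?cv_proper.
- case/and3P: (bounded u v euv) => _ _ ?; case/and3P: (bounded u w euw) => _ _ ?.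
  by rewrite inord_eq ?ce_proper.
- case/and3P: (bounded u v euv) => *; case/andP: (ce_cv u v euv).
  by rewrite -!(inord_eq (ce u v)) // => ? ?; split.
Qed.

End TotalColouring.

Section CompleteDirectProduct.
Variables (n : nat) (W : finType) (f : rel W).
Local Notation e := (direct_prod_rel (@complete_rel n) f).

Lemma degree_direct_prod_complete (x : 'I_n * W) : degree e x = n.-1 * degree f x.2.
Proof.
case: x => i w; rewrite /degree.
have -> : [set y | e (i, w) y] = setX [set~ i] [set y | f w y].
  by apply/setP => -[j b]; rewrite !inE /= eq_sym.
by rewrite cardsX cardsC1 card_ord.
Qed.

Lemma max_degree_direct_prod_complete : 0 < n -> max_degree e = n.-1 * max_degree f.
Proof.
move=> n_gt0; apply/eqP; rewrite eqn_leq; apply/andP; split.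
  apply/bigmax_leqP => x _.
  by rewrite degree_direct_prod_complete leq_mul2l leq_bigmax orbT.
rewrite /max_degree big_distrr /=; apply/bigmax_leqP => w _.
by rewrite -[_ * _](degree_direct_prod_complete (Ordinal n_gt0, w)) leq_bigmax.
Qed.

End CompleteDirectProduct.

Section LayerColouring.
Variables (n : nat) (L : nat -> nat -> nat).
Hypothesis L_latin : idempotent_latin_square n L.

Definition offset i j := if i < j then j - i - 1 else n + j - i - 1.

Definition layer_colour i j k :=
  if k is k'.+1 then n + (k' * n.-1 + offset i j) else L i j.

Lemma offset_lt i j : i < n -> j < n -> i != j -> offset i j < n.-1.
Proof. by rewrite /offset; case: (ltnP i j); lia. Qed.

Lemma offset_row_inj i j j' : i < n -> j < n -> j' < n -> i != j -> i != j' ->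
  offset i j = offset i j' -> j = j'.
Proof. by rewrite /offset; case: (ltnP i j); case: (ltnP i j'); lia. Qed.

Lemma offset_col_inj i i' j : i < n -> i' < n -> j < n -> i != j -> i' != j ->
  offset i j = offset i' j -> i = i'.
Proof. by rewrite /offset; case: (ltnP i j); case: (ltnP i' j); lia. Qed.

Lemma layer_colour_le i j k D : i < n -> j < n -> i != j -> k < D ->
  layer_colour i j k <= n.-1 * D.
Proof.
case: k => [|k] lt_in lt_jn ne_ij lt_kD /=.
  case: L_latin => L_lt _ _ _; have := L_lt _ _ lt_in lt_jn.
  by have := leq_pmulr n.-1 lt_kD; lia.
have := leq_mul lt_kD (leqnn n.-1); rewrite !mulSn mulnC.
by have := offset_lt lt_in lt_jn ne_ij; lia.
Qed.

Lemma layer_colour_neq i j k : i < n -> j < n -> i != j ->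
  (layer_colour i j k != i) && (layer_colour i j k != j).
Proof.
move=> lt_in lt_jn ne_ij; case: k => [|k] /=; last by apply/andP; split; apply/eqP; lia.
case: L_latin => _ L_diag L_row L_col.
apply/andP; split; apply: contra ne_ij => /eqP E; apply/eqP.
  by symmetry; apply: (L_row i); rewrite ?L_diag.
by apply: (L_col i j j); rewrite ?L_diag.
Qed.

Lemma layer_colour_layer_inj i j i' j' k k' :
    i < n -> j < n -> i != j -> i' < n -> j' < n -> i' != j' ->
  layer_colour i j k = layer_colour i' j' k' -> k = k'.
Proof.
case: L_latin => L_lt _ _ _ lt_in lt_jn ne_ij lt_i'n lt_j'n ne_i'j'.
have := L_lt _ _ lt_in lt_jn; have := L_lt _ _ lt_i'n lt_j'n.
case: k k' => [|k] [|k'] //= *; try lia.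
have lt_o := offset_lt lt_in lt_jn ne_ij; have lt_o' := offset_lt lt_i'n lt_j'n ne_i'j'.
have d_gt0 : 0 < n.-1 by lia.
have /(congr1 (divn^~ n.-1)) : k * n.-1 + offset i j = k' * n.-1 + offset i' j' by lia.
by rewrite !divnMDl // !divn_small // !addn0 => ->.
Qed.

Lemma layer_colour_row_inj i j j' k : i < n -> j < n -> j' < n -> i != j -> i != j' ->
  layer_colour i j k = layer_colour i j' k -> j = j'.
Proof.
case: L_latin => _ _ L_row _; case: k => [|k] /= lt_in lt_jn lt_j'n ne_ij ne_ij' E.
  exact: L_row E.
by apply: (offset_row_inj lt_in) => //; lia.
Qed.

Lemma layer_colour_col_inj i i' j k : i < n -> i' < n -> j < n -> i != j -> i' != j ->
  layer_colour i j k = layer_colour i' j k -> i = i'.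
Proof.
case: L_latin => _ _ _ L_col; case: k => [|k] /= lt_in lt_i'n lt_jn ne_ij ne_i'j E.
  exact: L_col E.
by apply: (offset_col_inj lt_in lt_i'n lt_jn) => //; lia.
Qed.

End LayerColouring.

Lemma direct_prod_complete_total_colourable n L (W : finType) (f : rel W)
    (side : W -> bool) D c :
    idempotent_latin_square n L -> (forall a b, f a b -> side a != side b) ->
    proper_edge_colouring f D c ->
  total_colourable (direct_prod_rel (@complete_rel n) f) (n.-1 * D).+1.
Proof.
move=> L_latin f_side [c_sym c_lt c_inj].
set e := direct_prod_rel _ _.
pose ce (x y : 'I_n * W) :=
  if side x.2 then layer_colour n L x.1 y.1 (c x.2 y.2)
  else layer_colour n L y.1 x.1 (c x.2 y.2).
have edgeP (x y : 'I_n * W) : e x y ->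
    [/\ nat_of_ord x.1 != y.1, f x.2 y.2 & side y.2 = ~~ side x.2].
  case/andP=> ne_xy fxy; split=> //.
  by move: (f_side _ _ fxy); case: (side x.2); case: (side y.2).
apply: (total_colourable_nat (cv := fun x : 'I_n * W => nat_of_ord x.1) (ce := ce)).
- move=> [i a] [j b] /edgeP[/= ne_ij fab _].
  have lt_D := c_lt a b fab; have D_gt0 : 0 < D by apply: leq_ltn_trans lt_D.
  have i_le : i <= n.-1 * D by apply: leq_trans (leq_pmulr _ D_gt0); have := ltn_ord i; lia.
  have j_le : j <= n.-1 * D by apply: leq_trans (leq_pmulr _ D_gt0); have := ltn_ord j; lia.
  rewrite i_le j_le /ce /=.
  by case: (side a); apply: layer_colour_le; rewrite // eq_sym.
- move=> [i a] [j b] /edgeP[/= _ fab side_b].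
  by rewrite /ce /= side_b (c_sym _ _ fab); case: (side a).
- by move=> [i a] [j b] /edgeP[].
- move=> [i a] [j b] [j' b'] /edgeP[/= ne_ij fab _] /edgeP[/= ne_ij' fab' _] ne_y.
  rewrite /ce /=; case: (eqVneq b b') => [eq_b | ne_b]; last first.
    have := c_inj _ _ _ fab fab' ne_b; apply: contra => /eqP.
    by case: (side a) => /layer_colour_layer_inj-> //; rewrite eq_sym.
  subst b'; have ne_jj' : j != j' :> nat by apply: contra ne_y => /eqP/val_inj->.
  apply: contra ne_jj' => /eqP; case: (side a).
    by move/layer_colour_row_inj => -> //.
  by move/layer_colour_col_inj => -> //; rewrite eq_sym.
- move=> [i a] [j b] /edgeP[/= ne_ij _ _]; rewrite /ce /=.
  by case: (side a); last rewrite andbC; apply: layer_colour_neq; rewrite // eq_sym.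
Qed.

Theorem corollary2 (n : nat) (hn1 : 1 <= n) (hn2 : n != 2)
    (W : finType) (f : rel W) (hW : 0 < #|W|) (hsimple : simple_graph f)
    (hbip : bipartite f) :
  type_I (direct_prod_rel (@complete_rel n) f).
Proof.
have [L L_latin] := idempotent_latin_square_exists hn2.
have [f_sym _] := hsimple.
have [side f_side] := hbip.
have [c c_proper] :=
  konig_edge_colouring (D := max_degree f) f_sym f_side (fun w => leq_bigmax w).
apply: type_I_of_total_colourable.
  by rewrite card_prod card_ord muln_gt0 hn1.
rewrite max_degree_direct_prod_complete //.
exact: direct_prod_complete_total_colourable L_latin f_side c_proper.
Qed.
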